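(* Consider problem (VP) under the standing assumptions at $\bar x\in Q_0$. Suppose $\bar x$ is a local weak efficient solution of (VP) (in particular, this applies if $\bar x$ is a local efficient solution), and that the weak Abadie regularity condition holds at $\bar x$, i.e. $L(Q;\bar x)\subset T(Q_0;\bar x)$, where $L(Q;\bar x):=\{v\in X: f_i^{\circ}(\bar x,v)\leqq0\ \forall i\in I,\ g_j^{\circ}(\bar x,v)\leqq 0\ \forall j\in J(\bar x)\}$. Then there is no $u\in X$ with $f_i^{\circ}(\bar x,u)<0$ for all $i\in I$ and $g_j^{\circ}(\bar x,u)\leqq0$ for all $j\in J(\bar x)$.
   Context: Standing setting: $X$ is a Banach space; $I=\{1,\dots,p\}$, $J=\{1,\dots,m\}$; $f_i,g_j\colon X\to\mathbb{R}$; (VP) minimizes $f=(f_1,\dots,f_p)$ over $Q_0:=\{x\in X: g_j(x)\leqq 0,\ j\in J\}$. $J(\bar x):=\{j\in J: g_j(\bar x)=0\}$. Standing assumptions: $f_i$ ($i\in I$), $g_j$ ($j\in J(\bar x)$) locally Lipschitz at $\bar x$; $g_j$ ($j\notin J(\bar x)$) continuous at $\bar x$. $Q:=Q_0\cap\{x: f_i(x)\leqq f_i(\bar x),\ i\in I\}$. Clarke derivative: $F^{\circ}(\bar x,u):=\limsup_{x\to\bar x,\,t\downarrow0}\frac{F(x+tu)-F(x)}{t}$. Tangent cone: $T(\Omega;\bar x):=\{d:\exists t_k\downarrow0,\ \exists d^k\to d,\ \bar x+t_kd^k\in\Omega\ \forall k\}$. $\bar x\in Q_0$ is a local weak efficient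 solution if there is a neighborhood $U$ of $\bar x$ such that no $x\in U\cap Q_0$ satisfies $f_i(x)<f_i(\bar x)$ for all $i\in I$; it is a local efficient solution if no $x\in U\cap Q_0$ satisfies $f(x)\leqq f(\bar x)$ componentwise with $f(x)\neq f(\bar x)$. *)

From Stdlib Require Import Reals Lra ClassicalEpsilon.
Open Scope R_scope.

Record BanachSpace := mkBanach {
  bcar :> Type;
  badd : bcar -> bcar -> bcar;
  bzero : bcar;
  bopp : bcar -> bcar;
  bscal : R -> bcar -> bcar;
  bnorm : bcar -> R;
  badd_assoc : forall x y z, badd x (badd y z) = badd (badd x y) z;
  badd_comm : forall x y, badd x y = badd y x;
  badd_zero : forall x, badd x bzero = x;
  badd_opp : forall x, badd x (bopp x) = bzero;
  bscal_assoc : forall a b x, bscal a (bscal b x) = bscal (a * b) x;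
  bscal_one : forall x, bscal 1 x = x;
  bscal_distr_v : forall a x y, bscal a (badd x y) = badd (bscal a x) (bscal a y);
  bscal_distr_s : forall a b x, bscal (a + b) x = badd (bscal a x) (bscal b x);
  bnorm_nonneg : forall x, 0 <= bnorm x;
  bnorm_eq0 : forall x, bnorm x = 0 -> x = bzero;
  bnorm_scal : forall a x, bnorm (bscal a x) = Rabs a * bnorm x;
  bnorm_triangle : forall x y, bnorm (badd x y) <= bnorm x + bnorm y;
  bcomplete : forall u : nat -> bcar,
    (forall eps, eps > 0 -> exists N, forall n m, (n >= N)%nat -> (m >= N)%nat ->
        bnorm (badd (u n) (bopp (u m))) < eps) ->
    exists l, Un_cv (fun n => bnorm (badd (u n) (bopp l))) 0
}.

Arguments badd {_}. Arguments bzero {_}. Arguments bopp {_}.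
Arguments bscal {_}. Arguments bnorm {_}.

Definition bsub {X : BanachSpace} (x y : X) : X := badd x (bopp y).

Definition loc_lipschitz {X : BanachSpace} (F : X -> R) (xb : X) : Prop :=
  exists K delta, delta > 0 /\
    forall x y, bnorm (bsub x xb) < delta -> bnorm (bsub y xb) < delta ->
      Rabs (F x - F y) <= K * bnorm (bsub x y).

Definition continuous_at {X : BanachSpace} (F : X -> R) (xb : X) : Prop :=
  forall eps, eps > 0 -> exists delta, delta > 0 /\
    forall x, bnorm (bsub x xb) < delta -> Rabs (F x - F xb) < eps.

Definition is_clarke_limsup {X : BanachSpace} (F : X -> R) (xb u : X) (l : R) : Prop :=
  (forall eps, eps > 0 -> exists delta, delta > 0 /\
     forall x t, bnorm (bsub x xb) < delta -> 0 < t < delta ->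
       (F (badd x (bscal t u)) - F x) / t < l + eps) /\
  (forall eps delta, eps > 0 -> delta > 0 -> exists x t,
     bnorm (bsub x xb) < delta /\ 0 < t < delta /\
     (F (badd x (bscal t u)) - F x) / t > l - eps).

(* Clarke generalized directional derivative F°(xb,u); it is the genuine
   (finite) limsup whenever F is locally Lipschitz at xb. *)
Definition clarke {X : BanachSpace} (F : X -> R) (xb u : X) : R :=
  epsilon (inhabits 0) (is_clarke_limsup F xb u).

Definition tangent_cone {X : BanachSpace} (Omega : X -> Prop) (xb : X) : X -> Prop :=
  fun d => exists (t : nat -> R) (dk : nat -> X),
    (forall k, t k > 0) /\ Un_cv t 0 /\
    Un_cv (fun k => bnorm (bsub (dk k) d)) 0 /\
    (forall k, Omega (badd xb (bscal (t k) (dk k)))).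

(* Problem (VP): f i (1 <= i <= p) objectives, g j (1 <= j <= m) constraints. *)
Definition feasible {X : BanachSpace} (m : nat) (g : nat -> X -> R) (x : X) : Prop :=
  forall j, (1 <= j <= m)%nat -> g j x <= 0.

Definition active {X : BanachSpace} (m : nat) (g : nat -> X -> R) (xb : X) (j : nat) : Prop :=
  (1 <= j <= m)%nat /\ g j xb = 0.

Definition local_weak_efficient {X : BanachSpace} (p m : nat)
  (f g : nat -> X -> R) (xb : X) : Prop :=
  feasible m g xb /\
  exists delta, delta > 0 /\
    ~ (exists x, bnorm (bsub x xb) < delta /\ feasible m g x /\
         forall i, (1 <= i <= p)%nat -> f i x < f i xb).

Definition L_cone {X : BanachSpace} (p m : nat) (f g : nat -> X -> R) (xb : X) : X -> Prop :=
  fun v => (forall i, (1 <= i <= p)%nat -> clarke (f i) xb v <= 0) /\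
           (forall j, active m g xb j -> clarke (g j) xb v <= 0).

(* If some direction u had f_i°(x,u) < 0 for all i and g_j°(x,u) <= 0 on the
   active constraints, then u would lie in L(Q;x), hence in T(Q_0;x): there are
   feasible points x + t_k d_k with t_k -> 0+ and d_k -> u.  The Clarke upper
   bound along u, transported from u to d_k by the Lipschitz estimate
   |f(x + t d) - f(x + t u)| <= K t |d - u|, gives f_i(x + t_k d_k) < f_i(x)
   for every i once k is large, and these points tend to x, contradicting
   local weak efficiency. *)
From Stdlib Require Import Reals Lra Lia Classical ClassicalEpsilon.
Open Scope R_scope.

Section VectorAlgebra.
Context {X : BanachSpace}.

Lemma badd_0_l (x : X) : badd bzero x = x.
Proof. rewrite badd_comm; apply badd_zero. Qed.

Lemma badd_idem_0 (a : X) : badd a a = a -> a = bzero.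
Proof.
  intro Haa. transitivity (badd (badd a a) (bopp a)).
  - rewrite <- badd_assoc, badd_opp, badd_zero. reflexivity.
  - rewrite Haa. apply badd_opp.
Qed.

Lemma bopp_unique (x y : X) : badd x y = bzero -> y = bopp x.
Proof.
  intro Hxy. rewrite <- (badd_zero X y), <- (badd_opp X x).
  rewrite badd_assoc, (badd_comm X y x), Hxy. apply badd_0_l.
Qed.

Lemma bscal_0_l (x : X) : bscal 0 x = bzero.
Proof. apply badd_idem_0. rewrite <- bscal_distr_s. f_equal; ring. Qed.

Lemma bscal_0_r (t : R) : bscal t (@bzero X) = bzero.
Proof.
  rewrite <- (bscal_0_l bzero), bscal_assoc, Rmult_0_r. reflexivity.
Qed.

Lemma bscal_opp (t : R) (u : X) : bscal t (bopp u) = bopp (bscal t u).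
Proof. apply bopp_unique. rewrite <- bscal_distr_v, badd_opp. apply bscal_0_r. Qed.

Lemma bopp_add (a b : X) : bopp (badd a b) = badd (bopp a) (bopp b).
Proof.
  symmetry. apply bopp_unique.
  rewrite badd_assoc, <- (badd_assoc X a b (bopp a)), (badd_comm X b (bopp a)).
  rewrite badd_assoc, badd_opp, badd_0_l. apply badd_opp.
Qed.

Lemma bnorm_0 : bnorm (@bzero X) = 0.
Proof. rewrite <- (bscal_0_l bzero), bnorm_scal, Rabs_R0. ring. Qed.

Lemma bnorm_sub_diag (x : X) : bnorm (bsub x x) = 0.
Proof. unfold bsub. rewrite badd_opp. apply bnorm_0. Qed.

Lemma bsub_add_cancel_l (x v : X) : bsub (badd x v) x = v.
Proof.
  unfold bsub. rewrite (badd_comm X x v), <- badd_assoc, badd_opp. apply badd_zero.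
Qed.

Lemma bsub_add_swap (x y v : X) : bsub (badd x v) y = badd (bsub x y) v.
Proof. unfold bsub. rewrite <- !badd_assoc. f_equal. apply badd_comm. Qed.

Lemma bsub_add_scal (x d u : X) (t : R) :
  bsub (badd x (bscal t d)) (badd x (bscal t u)) = bscal t (bsub d u).
Proof.
  unfold bsub. rewrite bscal_distr_v, bscal_opp, bopp_add.
  rewrite <- badd_assoc, (badd_assoc X (bscal t d) (bopp x) (bopp (bscal t u))).
  rewrite (badd_comm X (bscal t d) (bopp x)).
  rewrite <- badd_assoc, badd_assoc, badd_opp, badd_0_l. reflexivity.
Qed.

Lemma badd_bsub_cancel (u d : X) : badd u (bsub d u) = d.
Proof.
  unfold bsub. rewrite (badd_comm X d (bopp u)), badd_assoc, badd_opp. apply badd_0_l.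
Qed.

Lemma bnorm_scal_pos (t : R) (v : X) : 0 < t -> bnorm (bscal t v) = t * bnorm v.
Proof. intro. rewrite bnorm_scal, Rabs_right; lra. Qed.

Lemma bnorm_le_sub (d u : X) : bnorm d <= bnorm u + bnorm (bsub d u).
Proof. rewrite <- (badd_bsub_cancel u d) at 1. apply bnorm_triangle. Qed.

Lemma bnorm_scal_near_lt (t r : R) (d u : X) :
  0 < t -> t * (bnorm u + 1) <= r -> bnorm (bsub d u) < 1 -> bnorm (bscal t d) < r.
Proof.
  intros Ht Hr Hdu. rewrite bnorm_scal_pos by exact Ht.
  pose proof (bnorm_le_sub d u). nra.
Qed.

End VectorAlgebra.

Lemma Rabs_le_between (a b : R) : Rabs a <= b -> - b <= a <= b.
Proof.
  intro Hab. pose proof (Rle_abs a). pose proof (Rle_abs (- a)).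
  rewrite Rabs_Ropp in *. lra.
Qed.

Lemma loc_lipschitz_pos {X : BanachSpace} {F : X -> R} {xb : X} :
  loc_lipschitz F xb -> exists K delta, 0 < K /\ 0 < delta /\
    forall x y, bnorm (bsub x xb) < delta -> bnorm (bsub y xb) < delta ->
      Rabs (F x - F y) <= K * bnorm (bsub x y).
Proof.
  intros [K [delta [Hdelta HK]]]. exists (Rabs K + 1), delta.
  split; [pose proof (Rabs_pos K); lra|]. split; [exact Hdelta|].
  intros x y Hx Hy. eapply Rle_trans; [exact (HK x y Hx Hy)|].
  apply Rmult_le_compat_r; [apply bnorm_nonneg|]. pose proof (Rle_abs K). lra.
Qed.

Lemma diff_quotient_bounded {X : BanachSpace} {F : X -> R} {xb : X} (u : X) :
  loc_lipschitz F xb -> exists M delta, 0 < delta /\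
    forall x t, bnorm (bsub x xb) < delta -> 0 < t < delta ->
      Rabs ((F (badd x (bscal t u)) - F x) / t) <= M.
Proof.
  intros HF. destruct (loc_lipschitz_pos HF) as [K [d0 [HK [Hd0 HL]]]].
  pose proof (bnorm_nonneg _ u) as Hnu. set (nu := bnorm u) in *.
  exists (K * nu), (d0 / (nu + 2)). split; [apply Rdiv_lt_0_compat; lra|].
  intros x t Hx Ht.
  assert (Hd : d0 / (nu + 2) * (nu + 2) = d0) by (field; lra).
  assert (Hxt : bnorm (bsub (badd x (bscal t u)) xb) < d0).
  { rewrite bsub_add_swap. eapply Rle_lt_trans; [apply bnorm_triangle|].
    rewrite bnorm_scal_pos by lra. fold nu. nra. }
  assert (Hdx : bnorm (bsub x xb) < d0) by nra.
  pose proof (HL _ _ Hxt Hdx) as Hdiff.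
  rewrite bsub_add_cancel_l, bnorm_scal_pos in Hdiff by lra. fold nu in Hdiff.
  apply Rabs_le_between in Hdiff.
  set (a := F (badd x (bscal t u)) - F x) in *.
  assert (Ha : a = a / t * t) by (field; lra).
  apply Rabs_le. split; nra.
Qed.

(* The limsup is the supremum of the values that difference quotients exceed
   arbitrarily close to (xb, 0+). *)
Lemma clarke_limsup_of_bounded {X : BanachSpace} {F : X -> R} {xb u : X} {M d0 : R} :
  0 < d0 ->
  (forall x t, bnorm (bsub x xb) < d0 -> 0 < t < d0 ->
     Rabs ((F (badd x (bscal t u)) - F x) / t) <= M) ->
  exists l, is_clarke_limsup F xb u l.
Proof.
  intros Hd0 HM.
  set (q := fun x t => (F (badd x (bscal t u)) - F x) / t).
  set (A := fun z => forall d, d > 0 -> exists x t,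
              bnorm (bsub x xb) < d /\ 0 < t < d /\ q x t > z).
  assert (HAbound : bound A).
  { exists M. intros z Hz. destruct (Hz d0 Hd0) as [x [t [Hx [Ht Hq]]]].
    pose proof (HM x t Hx Ht). pose proof (Rle_abs (q x t)). unfold q in *. lra. }
  assert (HAinh : exists z, A z).
  { exists (- M - 1). intros d Hd. exists xb, (Rmin d d0 / 2).
    rewrite bnorm_sub_diag.
    assert (0 < Rmin d d0) by (apply Rmin_glb_lt; lra).
    pose proof (Rmin_l d d0). pose proof (Rmin_r d d0).
    assert (Hq := HM xb (Rmin d d0 / 2) ltac:(rewrite bnorm_sub_diag; lra) ltac:(lra)).
    apply Rabs_le_between in Hq. unfold q. lra. }
  destruct (completeness A HAbound HAinh) as [l [Hub Hlub]].
  exists l. split.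
  - intros eps Heps. apply NNPP. intro Hnot.
    assert (HA : A (l + eps / 2)).
    { intros d Hd. apply NNPP. intro Hnone. apply Hnot. exists d. split; [lra|].
      intros x t Hx Ht. apply Rnot_le_lt. intro Hge. apply Hnone.
      exists x, t. unfold q. repeat split; lra. }
    pose proof (Hub _ HA). lra.
  - intros eps d Heps Hd. apply NNPP. intro Hnot.
    assert (Hub' : is_upper_bound A (l - eps)).
    { intros z Hz. apply Rnot_lt_le. intro Hlt.
      destruct (Hz d Hd) as [x [t [Hx [Ht Hq]]]]. apply Hnot.
      exists x, t. unfold q in Hq. repeat split; lra. }
    pose proof (Hlub _ Hub'). lra.
Qed.

Lemma clarke_is_limsup {X : BanachSpace} {F : X -> R} {xb : X} (u : X) :
  loc_lipschitz F xb -> is_clarke_limsup F xb u (clarke F xb u).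
Proof.
  intro HF. unfold clarke. apply epsilon_spec.
  destruct (diff_quotient_bounded u HF) as [M [d0 [Hd0 HM]]].
  exact (clarke_limsup_of_bounded Hd0 HM).
Qed.

Lemma clarke_neg_descent {X : BanachSpace} {F : X -> R} {xb u : X} :
  loc_lipschitz F xb -> clarke F xb u < 0 ->
  exists delta eps, 0 < delta /\ 0 < eps /\
    forall t d, 0 < t < delta -> bnorm (bsub d u) < eps ->
      F (badd xb (bscal t d)) < F xb.
Proof.
  intros HF Hc. destruct (clarke_is_limsup u HF) as [Hupper _].
  set (c := clarke F xb u) in *.
  destruct (Hupper (- c / 2) ltac:(lra)) as [d1 [Hd1 Hquot]].
  destruct (loc_lipschitz_pos HF) as [K [d0 [HK [Hd0 HL]]]].
  pose proof (bnorm_nonneg _ u) as Hnu. set (nu := bnorm u) in *.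
  exists (Rmin d1 (d0 / (nu + 1))), (Rmin 1 (- c / (2 * K))).
  split; [apply Rmin_glb_lt; [lra | apply Rdiv_lt_0_compat; lra]|].
  split; [apply Rmin_glb_lt; [lra | apply Rdiv_lt_0_compat; lra]|].
  intros t d Ht Hdu.
  pose proof (Rmin_l d1 (d0 / (nu + 1))). pose proof (Rmin_r d1 (d0 / (nu + 1))).
  pose proof (Rmin_l 1 (- c / (2 * K))). pose proof (Rmin_r 1 (- c / (2 * K))).
  assert (Htnu : t * (nu + 1) <= d0).
  { assert (d0 / (nu + 1) * (nu + 1) = d0) by (field; lra). nra. }
  assert (Hstep_u : F (badd xb (bscal t u)) - F xb < t * (c / 2)).
  { specialize (Hquot xb t ltac:(rewrite bnorm_sub_diag; lra) ltac:(lra)).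
    set (a := F (badd xb (bscal t u)) - F xb) in *.
    assert (a = a / t * t) by (field; lra). nra. }
  assert (Hnear : forall v, bnorm (bsub v u) < 1 ->
            bnorm (bsub (badd xb (bscal t v)) xb) < d0).
  { intros v Hv. rewrite bsub_add_cancel_l.
    apply bnorm_scal_near_lt with (u := u); [lra | exact Htnu | exact Hv]. }
  pose proof (HL _ _ (Hnear d ltac:(lra)) (Hnear u ltac:(rewrite bnorm_sub_diag; lra)))
    as Hdiff.
  rewrite bsub_add_scal, bnorm_scal_pos in Hdiff by lra.
  apply Rabs_le_between in Hdiff.
  assert (HKw : K * bnorm (bsub d u) < - c / 2).
  { assert (K * (- c / (2 * K)) = - c / 2) by (field; lra). nra. }
  nra.
Qed.

Lemma tangent_seq_eventually {X : BanachSpace} {t : nat -> R} {dk : nat -> X} {u : X}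
  {delta eps : R} :
  Un_cv t 0 -> Un_cv (fun k => bnorm (bsub (dk k) u)) 0 -> 0 < delta -> 0 < eps ->
  exists N, forall k, (k >= N)%nat -> t k < delta /\ bnorm (bsub (dk k) u) < eps.
Proof.
  intros Ht Hd Hdelta Heps.
  destruct (Ht delta Hdelta) as [N1 HN1]. destruct (Hd eps Heps) as [N2 HN2].
  exists (max N1 N2). intros k Hk.
  specialize (HN1 k ltac:(lia)). specialize (HN2 k ltac:(lia)).
  unfold Rdist in HN1, HN2. rewrite Rminus_0_r in HN1, HN2.
  pose proof (Rle_abs (t k)).
  rewrite Rabs_right in HN2 by (apply Rle_ge, bnorm_nonneg). lra.
Qed.

Lemma eventually_forall_range (P : nat -> nat -> Prop) (n : nat) :
  (forall i, (1 <= i <= n)%nat -> exists N, forall k, (k >= N)%nat -> P i k) ->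
  exists N, forall i, (1 <= i <= n)%nat -> forall k, (k >= N)%nat -> P i k.
Proof.
  induction n as [|n IH]; intro Hev.
  - exists 0%nat. intros. lia.
  - destruct IH as [N1 HN1]; [intros i Hi; apply Hev; lia|].
    destruct (Hev (S n) ltac:(lia)) as [N2 HN2].
    exists (max N1 N2). intros i Hi k Hk.
    destruct (Nat.eq_dec i (S n)) as [->|Hne]; [apply HN2 | apply HN1]; lia.
Qed.

Theorem theorem4p1 (X : BanachSpace) (p m : nat) (f g : nat -> X -> R) (xb : X)
  (Hfeas : feasible m g xb)
  (Hf_lip : forall i, (1 <= i <= p)%nat -> loc_lipschitz (f i) xb)
  (Hg_lip : forall j, active m g xb j -> loc_lipschitz (g j) xb)
  (Hg_cont : forall j, (1 <= j <= m)%nat -> ~ active m g xb j -> continuous_at (g j) xb)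
  (Hwe : local_weak_efficient p m f g xb)
  (Habadie : forall v, L_cone p m f g xb v -> tangent_cone (feasible m g) xb v) :
  ~ (exists u : X,
       (forall i, (1 <= i <= p)%nat -> clarke (f i) xb u < 0) /\
       (forall j, active m g xb j -> clarke (g j) xb u <= 0)).
Proof.
  intros [u [Hfu Hgu]].
  assert (HuL : L_cone p m f g xb u) by (split; [intros i Hi; left|]; auto).
  destruct (Habadie u HuL) as [t [dk [Htpos [Ht [Hdk Hfeas_k]]]]].
  destruct Hwe as [_ [delta [Hdelta Hno_better]]].
  destruct (eventually_forall_range
              (fun i k => f i (badd xb (bscal (t k) (dk k))) < f i xb) p) as [N HN].
  { intros i Hi.
    destruct (clarke_neg_descent (Hf_lip i Hi) (Hfu i Hi)) as [d [e [Hd [He Hdesc]]]].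
    destruct (tangent_seq_eventually Ht Hdk Hd He) as [N HN].
    exists N. intros k Hk. destruct (HN k Hk).
    apply Hdesc; [split; [apply Htpos|] |]; assumption. }
  pose proof (bnorm_nonneg _ u) as Hnu.
  set (r := delta / (bnorm u + 1)).
  assert (Hr : 0 < r) by (apply Rdiv_lt_0_compat; lra).
  assert (Hr_delta : r * (bnorm u + 1) = delta) by (unfold r; field; lra).
  destruct (tangent_seq_eventually Ht Hdk Hr Rlt_0_1) as [N' HN'].
  set (k := max N N').
  destruct (HN' k ltac:(lia)) as [Htk Hdku].
  apply Hno_better. exists (badd xb (bscal (t k) (dk k))). repeat split.
  - rewrite bsub_add_cancel_l. pose proof (Htpos k).
    apply bnorm_scal_near_lt with (u := u); [lra | nra | exact Hdku].
  - apply Hfeas_k.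
  - intros i Hi. apply HN; [exact Hi | lia].
Qed.
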